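(* Let $G$ be a connected graph with vertex set $\{v_1,\dots,v_n\}$, $n\geq 2$, and let $\widehat{G}$ be the graph constructed from $G$ as described in the context. Then the branch graph $B(\widehat{G}/C_q)$ is isomorphic to $G$, via the map $P_i\mapsto v_i$.
   Context: Construction of $\widehat{G}$: let $T$ be the star with center $q$ and leaves $y_1,\dots,y_n$. Let $\mathcal{P}$ be the family of paths of $T$ consisting of: for each $1\le i\le n$ a one-vertex path $P_i$ with $V(P_i)=\{y_i\}$; for each $1\le i<j\le n$ with $v_iv_j\in E(G)$ a path $P_{ij}$ with $V(P_{ij})=\{y_i,q,y_j\}$; for each $i$ with $d_G(v_i)=1$ a path $P_{iq}$ with $V(P_{iq})=\{q,y_i\}$. $\widehat{G}$ is the vertex-intersection graph of $\mathcal{P}$ (its vertices are the paths, two adjacent iff they share a vertex of $T$). $C_q$ is the set of paths of $\mathcal{P}$ containing $q$; it is a clique (maximal complete set) of $\widehat{G}$. For a clique $C$ of a graph $H$, the branch graph $B(H/C)$ has vertex set the vertices of $V(H)\setminus C$ adjacent to some vertex of $C$, and two such vertices $v,w$ are adjacent in $B(H/C)$ iff (1) $vw\notin E(H)$; (2) some vertex of $C$ is adjacent to both; and (3) there exist $v',w'\in C$ with $v'$ adjacent to $v$ but not to $w$, and $w'$ adjacent to $w$ but not to $v$. *)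

From mathcomp Require Import all_boot.
Set Implicit Arguments. Unset Strict Implicit. Unset Printing Implicit Defensive.

(* A finite simple graph on vertex type 'I_n is a symmetric irreflexive
   relation e; v_i is represented by i : 'I_n. *)

(* The star T: vertex set option 'I_n, centre q = None, leaves y_i = Some i.
   A path of T is represented by its vertex set. *)

Section Construction.
Variables (n : nat) (e : rel 'I_n).

Definition degree (i : 'I_n) : nat := #|[set j | e i j]|.

Definition pathsP : {set {set option 'I_n}} :=
  [set [set Some i] | i : 'I_n]
  :|: [set [set Some p.1; None; Some p.2] | p in [set p : 'I_n * 'I_n | (p.1 < p.2) && e p.1 p.2]]
  :|: [set [set None; Some i] | i in [set i | degree i == 1]].

Definition Ghat_adj (P Q : {set option 'I_n}) : bool :=
  [&& P \in pathsP, Q \in pathsP, P != Q & ~~ [disjoint P & Q]].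

Definition Cq : {set {set option 'I_n}} := [set P in pathsP | None \in P].
End Construction.

Section Branch.
Variables (T : finType) (V : {set T}) (adj : rel T) (C : {set T}).

Definition branch_vertices : {set T} :=
  [set v in V :\: C | [exists c in C, adj v c]].

Definition branch_adj (v w : T) : bool :=
  [&& v \in branch_vertices, w \in branch_vertices,
      ~~ adj v w,
      [exists c in C, adj c v && adj c w] &
      [exists v' in C, exists w' in C,
         [&& adj v' v, ~~ adj v' w, adj w' w & ~~ adj w' v]]].
End Branch.

From mathcomp Require Import all_boot.

Set Implicit Arguments.
Unset Strict Implicit.
Unset Printing Implicit Defensive.

(* The argument rests on three facts about C_q, all obtained from a
   case analysis of the three kinds of paths in P:
   - a path of C_q meets a leaf path P_i exactly when it contains y_i, so the
     Ghat-adjacencies between C_q and leaf paths are read off membership;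
   - two distinct leaves y_i, y_j lie on a common path of C_q iff v_i v_j is
     an edge (the path P_ij);
   - for an edge v_i v_j there is a path of C_q containing y_i but not y_j:
     P_iq if v_i has degree 1, and P_ik for a second neighbour v_k otherwise.
   Since G is connected with n >= 2 vertices, every v_i has a neighbour, so
   every leaf path is adjacent to C_q; the paths P_ij and P_iq contain q and
   so are not branch vertices.  The branch vertices are thus exactly the leaf
   paths, distinct leaf paths are never adjacent in Ghat, and conditions (2)
   and (3) of branch adjacency hold for P_i, P_j exactly when v_i v_j is an
   edge. *)

Local Notation leaf i := [set Some i].

Section StarPaths.
Variables (n : nat) (e : rel 'I_n).
Hypotheses (e_sym : symmetric e) (e_irr : irreflexive e).

Lemma pathsP_cases P : P \in pathsP e ->
  [\/ exists i, P = leaf i,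
      exists i j, e i j /\ P = [set Some i; None; Some j]
    | exists i, P = [set None; Some i]].
Proof.
rewrite /pathsP !inE => /orP[/orP[/imsetP[i _ ->] | /imsetP[[i j]]] | /imsetP[i _ ->]].
- by apply: Or31; exists i.
- by rewrite inE /= => /andP[_ eij] ->; apply: Or32; exists i, j.
- by apply: Or33; exists i.
Qed.

Lemma leaf_in_pathsP i : leaf i \in pathsP e.
Proof. by rewrite /pathsP !inE; apply/orP; left; apply/orP; left; apply: imset_f. Qed.

Lemma leaf_notin_Cq i : leaf i \notin Cq e.
Proof. by rewrite /Cq !inE andbF. Qed.

Lemma spoke_in_Cq i j : e i j -> [set Some i; None; Some j] \in Cq e.
Proof.
move=> eij; rewrite /Cq inE; apply/andP; split; last by rewrite !inE.
rewrite /pathsP !inE.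
apply/orP; left; apply/orP; right; apply/imsetP.
case: (ltngtP i j) => [lt_ij | lt_ji | /val_inj eq_ij].
- by exists (i, j); rewrite // inE /= lt_ij eij.
- exists (j, i); first by rewrite inE /= lt_ji e_sym eij.
  by apply/setP => x; rewrite /= !inE; do !case: eqP.
- by move: eij; rewrite eq_ij e_irr.
Qed.

Lemma pendant_in_Cq i : degree e i == 1 -> [set None; Some i] \in Cq e.
Proof.
move=> deg1; rewrite /Cq inE; apply/andP; split; last by rewrite !inE.
rewrite /pathsP !inE.
by apply/orP; right; apply/imsetP; exists i; rewrite ?inE.
Qed.

Lemma Cq_adj_leaf c i : c \in Cq e ->
  (Ghat_adj e c (leaf i) = (Some i \in c)) /\
  (Ghat_adj e (leaf i) c = (Some i \in c)).
Proof.
rewrite /Cq inE => /andP[cP cq].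
have c_neq : c != leaf i by apply: contraTneq cq => ->; rewrite inE.
rewrite /Ghat_adj cP leaf_in_pathsP c_neq eq_sym c_neq.
by rewrite disjoints1 disjoint_sym disjoints1 negbK.
Qed.

Lemma leaf_nonadj i j : ~~ Ghat_adj e (leaf i) (leaf j).
Proof.
rewrite /Ghat_adj disjoints1 negbK in_set1 (inj_eq (@Some_inj _)).
by apply/negP => /and4P[_ _ + /eqP ij]; rewrite ij eqxx.
Qed.

Lemma Cq_common_leaves c i j : c \in Cq e ->
  Some i \in c -> Some j \in c -> (i == j) || e i j.
Proof.
rewrite /Cq inE => /andP[cP _].
have [[a ->]|[a [b [eab ->]]]|[a ->]] := pathsP_cases cP; rewrite !inE.
- by move=> /eqP[->] /eqP[->]; rewrite eqxx.
- move=> /orP[/orP[/eqP[->]|//]|/eqP[->]] /orP[/orP[/eqP[->]|//]|/eqP[->]];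
    by rewrite ?eqxx // ?eab ?orbT // e_sym eab orbT.
- by move=> /orP[//|/eqP[->]] /orP[//|/eqP[->]]; rewrite eqxx.
Qed.

Lemma Cq_private_leaf i j : e i j ->
  exists2 c, c \in Cq e & (Some i \in c) && (Some j \notin c).
Proof.
move=> eij.
have ij : i != j by apply: contraTneq eij => ->; rewrite e_irr.
have [deg1 | deg_ne1] := boolP (degree e i == 1).
  exists [set None; Some i]; first exact: pendant_in_Cq.
  by rewrite !inE eqxx /= eq_sym.
have [k] : exists k, k \in [set x | e i x] :\ j.
  apply/set0Pn; apply: contra deg_ne1 => /eqP Nj0.
  by rewrite /degree (cardsD1 j) Nj0 cards0 inE eij.
rewrite !inE => /andP[kj eik].
exists [set Some i; None; Some k]; first exact: spoke_in_Cq.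
rewrite !inE eqxx /=; apply/negP => /orP[/orP[/eqP[ji]|//]|/eqP[jk]].
- by rewrite ji eqxx in ij.
- by rewrite jk eqxx in kj.
Qed.

End StarPaths.

Lemma connected_has_neighbour n (e : rel 'I_n) :
  (forall i j : 'I_n, connect e i j) -> 2 <= n -> forall i, exists k, e i k.
Proof.
move=> e_conn n_ge2 i.
have [j ji] : exists j : 'I_n, j != i.
  have [-> | i_ne0] := eqVneq i (Ordinal (ltnW n_ge2)).
    by exists (Ordinal n_ge2).
  by exists (Ordinal (ltnW n_ge2)); rewrite eq_sym.
case/connectP: (e_conn i j) => [[|k p]] /= ek last_j.
  by rewrite last_j eqxx in ji.
by case/andP: ek => eik _; exists k.
Qed.

Section BranchGraph.
Variables (n : nat) (e : rel 'I_n).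
Hypotheses (e_sym : symmetric e) (e_irr : irreflexive e).
Hypothesis e_nbr : forall i, exists k, e i k.

Local Notation B := (branch_vertices (pathsP e) (Ghat_adj e) (Cq e)).

Lemma branch_vertices_leaves P : P \in B <-> exists i, P = leaf i.
Proof.
rewrite /branch_vertices inE in_setD; split.
  move=> /andP[/andP[PnC PP] _].
  have [//|[a [b [eab Pab]]]|[a Pa]] := pathsP_cases PP.
    by move: PnC; rewrite Pab (spoke_in_Cq e_sym e_irr eab).
  by move: PnC; rewrite /Cq inE PP Pa !inE eqxx.
case=> i ->; rewrite leaf_notin_Cq leaf_in_pathsP /=.
have [k eik] := e_nbr i; have cC := spoke_in_Cq e_sym e_irr eik.
by apply/existsP; exists [set Some i; None; Some k]; rewrite cC (Cq_adj_leaf _ cC).2 !inE eqxx.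
Qed.

Lemma branch_adj_leaves i j :
  branch_adj (pathsP e) (Ghat_adj e) (Cq e) (leaf i) (leaf j) = e i j.
Proof.
have leafB k : leaf k \in B by apply/branch_vertices_leaves; exists k.
rewrite /branch_adj !leafB leaf_nonadj /=.
have [<- | ij] := eqVneq i j.
  rewrite e_irr; apply/negbTE/andP => -[_ /existsP[c /andP[_ /existsP[c' /andP[_]]]]].
  by case/and4P => adj_c not_adj_c _ _; rewrite adj_c in not_adj_c.
apply/andP/idP.
  case=> /existsP[c /andP[cC]] + _.
  rewrite !(Cq_adj_leaf _ cC).1 => /andP[ci cj].
  by have := Cq_common_leaves e_sym cC ci cj; rewrite (negbTE ij).
move=> eij; split.
  have cC := spoke_in_Cq e_sym e_irr eij.
  by apply/existsP; exists [set Some i; None; Some j]; rewrite cC !(Cq_adj_leaf _ cC).1 !inE !eqxx orbT.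
have [c cC /andP[ci cj]] := Cq_private_leaf e_sym e_irr eij.
have [c' c'C /andP[c'j c'i]] := Cq_private_leaf e_sym e_irr (etrans (e_sym j i) eij).
apply/existsP; exists c; rewrite cC; apply/existsP; exists c'.
by rewrite c'C !(Cq_adj_leaf _ cC).1 !(Cq_adj_leaf _ c'C).1 ci cj c'j c'i.
Qed.

End BranchGraph.

Theorem claim1 (n : nat) (e : rel 'I_n)
  (e_sym : symmetric e) (e_irr : irreflexive e)
  (e_conn : forall i j : 'I_n, connect e i j)
  (n_ge2 : 2 <= n) :
  let V := pathsP e in
  let adj := Ghat_adj e in
  let C := Cq e in
  let f := fun i : 'I_n => [set Some i] : {set option 'I_n} in
  injective f /\
  (forall P, P \in branch_vertices V adj C <-> exists i, P = f i) /\
  (forall i j : 'I_n, branch_adj V adj C (f i) (f j) = e i j).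
Proof.
move=> V adj C f.
have e_nbr := connected_has_neighbour e_conn n_ge2.
split; first by move=> i j /set1_inj [].
split; first exact: branch_vertices_leaves e_sym e_irr e_nbr.
exact: branch_adj_leaves e_sym e_irr e_nbr.
Qed.
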